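(* Let $n\ge 1$ and consider the NSGA-II with population size $N\ge 4(n+1)$ optimizing \textsc{OneMinMax} (with any way of generating the offspring population $Q_t$). Suppose that in some iteration $t$ the combined population $R_t=P_t\cup Q_t$ contains an individual $x$ with $f(x)=(k,n-k)$ for some $k\in\{0,\dots,n\}$. Then the next parent population $P_{t+1}$ contains an individual $y$ with $f(y)=(k,n-k)$.
   Context: Search space $\{0,1\}^n$; objective $f=(f_1,f_2):\{0,1\}^n\to\mathbb{R}^2$, both objectives maximized. $x$ strictly dominates $y$ if $f_1(x)\ge f_1(y)$, $f_2(x)\ge f_2(y)$ and at least one inequality is strict. Populations are multisets of bit strings; for a population $P$, $f(P)=\{f(x):x\in P\}$. Non-dominated sorting of a population $S$: $F_1$ is the set of individuals of $S$ not strictly dominated by any individual of $S$; inductively, $F_{k+1}$ is the set of individuals of $S\setminus(F_1\cup\dots\cup F_k)$ not strictly dominated by any individual of $S\setminus(F_1\cup\dots\cup F_k)$; the rank of $x$ in $S$ is the $k$ with $x\in F_k$. Crowding distance of the individuals of a set $S$ (computed with respect to $S$): start with $\mathrm{cDis}(x)=0$ for all $x\in S$; for each $i\in\{1,2\}$, sort $S$ in ascending $f_i$-value as $S_{i.1},\dots,S_{i.|S|}$ (ties broken arbitrarily), set $\mathrm{cDis}(S_{i.1})=\mathrm{cDis}(S_{i.|S|})=+\infty$, and for $2\le j\le |S|-1$ add $\frac{f_i(S_{i.j+1})-f_i(S_{i.j-1})}{f_i(S_{i.|S|})-f_i(S_{i.1})}$ to $\mathrm{cDis}(S_{i.j})$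 (if $f_i$ is constant on $S$, these summands are taken to be $0$). The NSGA-II with population size $N$: $P_0$ consists of $N$ independent uniformly random bit strings; in iteration $t=0,1,2,\dots$ it generates an offspring population $Q_t$ of $N$ individuals, sets $R_t=P_t\cup Q_t$ (multiset union, $2N$ individuals), computes the fronts $F_1,F_2,\dots$ of $R_t$, lets $i^*$ be minimal with $\sum_{i\le i^*}|F_i|\ge N$, computes the crowding distance of each individual of $F_i$ ($i\le i^*$) with respect to $F_i$, and sets $P_{t+1}=F_1\cup\dots\cup F_{i^*-1}\cup\tilde F_{i^*}$, where $\tilde F_{i^*}$ consists of the $N-\sum_{i<i^*}|F_i|$ individuals of $F_{i^*}$ with largest crowding distance, ties broken uniformly at random. \textsc{OneMinMax}: $f(x)=(n-\sum_{i=1}^n x_i,\ \sum_{i=1}^n x_i)$. Its Pareto front is $\{(k,n-k):k\in\{0,\dots,n\}\}$; every bit string is Pareto optimal. *)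

From mathcomp Require Import all_boot all_order all_algebra.
Set Implicit Arguments. Unset Strict Implicit. Unset Printing Implicit Defensive.
Import Order.TTheory GRing.Theory Num.Theory.
Local Open Scope ring_scope.

Section NSGA2.
(* Individuals of the combined population R_t are indexed by a finite type I
   (so R_t is a multiset: distinct indices may carry equal bit strings);
   fv i = (f_1, f_2) of individual i. *)
Variable I : finType.
Variable fv : I -> rat * rat.

Definition f1 (i : I) : rat := (fv i).1.
Definition f2 (i : I) : rat := (fv i).2.

Definition sdom (x y : I) : bool :=
  [&& f1 y <= f1 x, f2 y <= f2 x & (f1 y < f1 x) || (f2 y < f2 x)].

Definition nondom (S : {set I}) : {set I} :=
  [set x in S | [forall y in S, ~~ sdom y x]].

(* rest S k = S minus F_1 ... F_k ;  front S k = F_{k+1} (0-indexed) *)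
Fixpoint rest (S : {set I}) (k : nat) : {set I} :=
  match k with
  | 0 => S
  | k'.+1 => rest S k' :\: nondom (rest S k')
  end.
Definition front (S : {set I}) (k : nat) : {set I} := nondom (rest S k).

(* Crowding distance: None stands for +infinity. *)
Definition cd_le (a b : option rat) : bool :=
  match a, b with
  | _, None => true
  | None, Some _ => false
  | Some x, Some y => x <= y
  end.

(* contribution of objective g, for a list s sorting the set ascending in g *)
Definition cd_boundary (s : seq I) (x : I) : bool :=
  (index x s == 0)%N || (index x s == (size s).-1)%N.

Definition cd_term (g : I -> rat) (x0 : I) (s : seq I) (x : I) : rat :=
  let p := index x s in
  let d := g (last x0 s) - g (head x0 s) in
  if d == 0 then 0 else (g (nth x0 s p.+1) - g (nth x0 s p.-1)) / d.

Definition cdist (s1 s2 : seq I) (x : I) : option rat :=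
  if cd_boundary s1 x || cd_boundary s2 x then None
  else Some (cd_term f1 x s1 x + cd_term f2 x s2 x).

Definition sorting_of (g : I -> rat) (F : {set I}) (s : seq I) : Prop :=
  perm_eq s (enum F) /\ sorted (fun a b => g a <= g b) s.

(* P is a possible outcome of the NSGA-II survival selection of N individuals
   from the combined population S (= R_t), for some admissible tie-breaking. *)
Definition nsga2_select (N : nat) (S P : {set I}) : Prop :=
  exists istar : nat,
    (N <= #|S :\: rest S istar.+1|)%N /\
    (forall j, (j < istar)%N -> (#|S :\: rest S j.+1| < N)%N) /\
    exists s1 s2 : seq I,
      sorting_of f1 (front S istar) s1 /\ sorting_of f2 (front S istar) s2 /\
      exists T : {set I},
        [/\ T \subset front S istar,
            #|T| = (N - #|S :\: rest S istar|)%N,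
            (forall a b, a \in T -> b \in front S istar :\: T ->
                 cd_le (cdist s1 s2 b) (cdist s1 s2 a))
          & P = (S :\: rest S istar) :|: T].

End NSGA2.

Definition OneMinMax (n : nat) (x : n.-tuple bool) : rat * rat :=
  (((n - count id x)%N)%:R, (count id x)%:R).

From mathcomp Require Import all_boot all_order all_algebra zify.
Set Implicit Arguments. Unset Strict Implicit. Unset Printing Implicit Defensive.
Import Order.TTheory GRing.Theory Num.Theory.
Local Open Scope ring_scope.

(* On OneMinMax no individual dominates another, so the selection merely
   truncates R_t to N individuals by crowding distance.  Sort R_t by each
   objective: an individual that is neither first nor last in its block of
   equal values, in both sortings, has crowding distance 0, so at most
   4(n+1) individuals have positive distance.  The first individual of the
   block of value (k, n-k) has positive distance; if it were discarded, all
   N survivors would have at least its distance, giving N + 1 > 4(n+1) individuals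
   of positive distance. *)

Section SortedBlocks.
Variables (I : finType) (g : I -> rat) (s : seq I).
Hypothesis s_sorted : sorted (fun a b => g a <= g b) s.

Lemma sorted_le_nth x0 i j : (i <= j)%N -> (j < size s)%N ->
  g (nth x0 s i) <= g (nth x0 s j).
Proof.
move=> le_ij lt_js.
have g_trans : transitive (fun a b => g a <= g b) by move=> b a c; apply: le_trans.
apply: (sorted_leq_nth g_trans _ x0 s_sorted) => //.
by rewrite inE (leq_ltn_trans le_ij).
Qed.

(* A block is a maximal run of consecutive elements of [s] with equal [g]-values. *)
Definition block_first : {set I} :=
  [set x in s | (index x s == 0)%N || (g (nth x s (index x s).-1) < g x)].
Definition block_last : {set I} :=
  [set x in s | (index x s == (size s).-1)%N || (g x < g (nth x s (index x s).+1))].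

Lemma block_first_lt x y : x \in s -> y \in block_first ->
  (index x s < index y s)%N -> g x < g y.
Proof.
move=> xs; rewrite inE => /andP[ys /orP[/eqP-> //|lt_pred]] lt_xy.
apply: le_lt_trans lt_pred; rewrite -{1}(nth_index y xs).
apply: sorted_le_nth; first by rewrite -ltnS prednK // (leq_ltn_trans _ lt_xy).
by rewrite (leq_ltn_trans (leq_pred _)) // index_mem.
Qed.

Lemma block_last_lt x y : x \in block_last -> y \in s ->
  (index x s < index y s)%N -> g x < g y.
Proof.
rewrite inE => /andP[xs /orP[/eqP last_x|lt_succ]] ys lt_xy.
  have lt_ys : (index y s < size s)%N by rewrite index_mem.
  by move: lt_xy lt_ys; rewrite last_x; lia.
apply: lt_le_trans lt_succ _; rewrite -(nth_index x ys).
by apply: sorted_le_nth => //; rewrite index_mem.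
Qed.

Lemma eq_of_index_order x y : x \in s -> y \in s -> g x = g y ->
  ((index x s < index y s)%N -> g x < g y) ->
  ((index y s < index x s)%N -> g y < g x) -> x = y.
Proof.
move=> xs ys gxy lt_xy lt_yx; apply: (index_inj x xs ys).
case: (ltngtP (index x s) (index y s)) => [/lt_xy|/lt_yx|//];
  by rewrite gxy ltxx.
Qed.

Lemma block_first_inj x y : x \in block_first -> y \in block_first -> g x = g y -> x = y.
Proof.
move=> xF yF gxy; have xs : x \in s by move: xF; rewrite inE => /andP[].
have ys : y \in s by move: yF; rewrite inE => /andP[].
by apply: eq_of_index_order => // ?; apply: block_first_lt.
Qed.

Lemma block_last_inj x y : x \in block_last -> y \in block_last -> g x = g y -> x = y.
Proof.
move=> xL yL gxy; have xs : x \in s by move: xL; rewrite inE => /andP[].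
have ys : y \in s by move: yL; rewrite inE => /andP[].
by apply: eq_of_index_order => // ?; apply: block_last_lt.
Qed.

Lemma exists_block_first x : x \in s -> exists2 y, y \in block_first & g y = g x.
Proof.
move=> xs; pose a y := g y == g x.
have has_a : has a s by apply/hasP; exists x; rewrite /a ?eqxx.
set q := find a s; set y := nth x s q.
have lt_qs : (q < size s)%N by rewrite -has_find.
have /eqP gyx : a y by apply: nth_find.
have ys : y \in s by apply: mem_nth.
have le_iq : (index y s <= q)%N.
  by rewrite leqNgt; apply/negP => /(before_find x) /=; rewrite eqxx.
exists y => //; rewrite inE ys /=; case: (posnP (index y s)) => [->|i_gt0] //=.
have lt_pred : ((index y s).-1 < q)%N by rewrite prednK.
rewrite (set_nth_default x) ?(ltn_trans lt_pred) //.
rewrite lt_neqAle gyx; have /negbT -> /= := before_find x lt_pred.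
rewrite -gyx -{2}(nth_index x ys); apply: sorted_le_nth; first exact: leq_pred.
by rewrite index_mem.
Qed.

Lemma not_cd_boundary x : x \in s -> x \notin block_first -> x \notin block_last ->
  ~~ cd_boundary s x.
Proof. by rewrite !inE => -> /norP[ne_first _] /norP[ne_last _]; apply/norP. Qed.

Lemma cd_term_ge0 x : x \in s -> ~~ cd_boundary s x -> 0 <= cd_term g x s x.
Proof.
rewrite /cd_boundary negb_or => xs /andP[ne_first ne_last].
have lt_is : (index x s < size s)%N by rewrite index_mem.
rewrite /cd_term; case: eqP => // _; apply: divr_ge0; rewrite subr_ge0.
  by apply: sorted_le_nth; move: lt_is ne_first ne_last; lia.
rewrite -nth_last -nth0; apply: sorted_le_nth; move: lt_is; lia.
Qed.

Lemma cd_term_gt0 x : x \in block_first -> ~~ cd_boundary s x -> 0 < cd_term g x s x.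
Proof.
rewrite inE /cd_boundary negb_or => /andP[xs first_x] /andP[ne_first ne_last].
have lt_is : (index x s < size s)%N by rewrite index_mem.
have lt_pred : g (nth x s (index x s).-1) < g x by case/orP: first_x ne_first => [->|].
have le_succ : g x <= g (nth x s (index x s).+1).
  by rewrite -{1}(nth_index x xs); apply: sorted_le_nth; move: lt_is ne_last; lia.
have le_head : g (head x s) <= g (nth x s (index x s).-1).
  by rewrite -nth0; apply: sorted_le_nth; move: lt_is; lia.
have le_last : g x <= g (last x s).
  by rewrite -nth_last -{1}(nth_index x xs); apply: sorted_le_nth; move: lt_is; lia.
have span_gt0 : 0 < g (last x s) - g (head x s).
  by rewrite subr_gt0 (le_lt_trans le_head) // (lt_le_trans lt_pred).
rewrite /cd_term gt_eqF // divr_gt0 // subr_gt0; exact: lt_le_trans le_succ.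
Qed.

Lemma cd_term_eq0 x : x \in s -> x \notin block_first -> x \notin block_last ->
  cd_term g x s x = 0.
Proof.
rewrite !inE => xs; rewrite xs /= !negb_or -!leNgt.
move=> /andP[ne_first ge_pred] /andP[ne_last le_succ].
have lt_is : (index x s < size s)%N by rewrite index_mem.
have eq_pred : g (nth x s (index x s).-1) = g x.
  apply/le_anti; rewrite ge_pred andbT.
  by have := sorted_le_nth x (leq_pred _) lt_is; rewrite nth_index.
have eq_succ : g (nth x s (index x s).+1) = g x.
  apply/le_anti; rewrite le_succ /= -{1}(nth_index x xs).
  by apply: sorted_le_nth => //; move: lt_is ne_last; lia.
by rewrite /cd_term eq_pred eq_succ subrr mul0r if_same.
Qed.

Section CardBound.
Variables (V : finType) (h : I -> V).
Hypothesis g_factors : forall x y, h x = h y -> g x = g y.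

Lemma card_block_first_le : (#|block_first| <= #|V|)%N.
Proof. by apply: (@leq_card_in _ _ h) => x y xF yF /g_factors; apply: block_first_inj. Qed.

Lemma card_block_last_le : (#|block_last| <= #|V|)%N.
Proof. by apply: (@leq_card_in _ _ h) => x y xL yL /g_factors; apply: block_last_inj. Qed.

End CardBound.
End SortedBlocks.

Definition cd_pos (c : option rat) : bool := ~~ cd_le c (Some 0).

Lemma cd_pos_le a b : cd_le a b -> cd_pos a -> cd_pos b.
Proof. by case: a b => [x|] [y|] //=; rewrite /cd_pos /= -!ltNge => le_xy /lt_le_trans; apply. Qed.

Lemma card_setU_le (T : finType) (A B : {set T}) : (#|A :|: B| <= #|A| + #|B|)%N.
Proof. exact: (leq_card_setU A B).1. Qed.

Section CrowdingDistance.
Variables (I : finType) (fv : I -> rat * rat) (s1 s2 : seq I).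
Hypotheses (s1_sorted : sorted (fun a b => f1 fv a <= f1 fv b) s1)
           (s2_sorted : sorted (fun a b => f2 fv a <= f2 fv b) s2).

Definition block_boundaries : {set I} :=
  block_first (f1 fv) s1 :|: block_last (f1 fv) s1 :|:
  (block_first (f2 fv) s2 :|: block_last (f2 fv) s2).

Lemma cd_pos_block_boundary x : x \in s1 -> x \in s2 ->
  cd_pos (cdist fv s1 s2 x) -> x \in block_boundaries.
Proof.
move=> x1 x2; apply: contraTT; rewrite !in_setU !negb_or.
move=> /andP[/andP[out_first1 out_last1] /andP[out_first2 out_last2]].
have /negbTE inner1 := not_cd_boundary x1 out_first1 out_last1.
have /negbTE inner2 := not_cd_boundary x2 out_first2 out_last2.
by rewrite /cd_pos negbK /cdist inner1 inner2 /= !cd_term_eq0 ?addr0.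
Qed.

Lemma cd_pos_block_first x : x \in s2 -> x \in block_first (f1 fv) s1 ->
  cd_pos (cdist fv s1 s2 x).
Proof.
move=> x2 first_x; have x1 : x \in s1 by move: first_x; rewrite inE => /andP[].
rewrite /cd_pos /cdist; case: ifPn => // /norP[inner1 inner2] /=.
by rewrite -ltNge ltr_pwDl ?cd_term_gt0 ?cd_term_ge0.
Qed.

Lemma card_block_boundaries_le (V : finType) (h : I -> V) :
  (forall x y, h x = h y -> fv x = fv y) -> (#|block_boundaries| <= 4 * #|V|)%N.
Proof.
move=> fv_factors.
have f1_factors x y : h x = h y -> f1 fv x = f1 fv y by move=> /fv_factors; rewrite /f1 => ->.
have f2_factors x y : h x = h y -> f2 fv x = f2 fv y by move=> /fv_factors; rewrite /f2 => ->.
have := card_block_first_le s1_sorted f1_factors.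
have := card_block_last_le s1_sorted f1_factors.
have := card_block_first_le s2_sorted f2_factors.
have := card_block_last_le s2_sorted f2_factors.
rewrite /block_boundaries.
set A1 := block_first _ s1; set B1 := block_last _ s1.
set A2 := block_first _ s2; set B2 := block_last _ s2.
have := card_setU_le (A1 :|: B1) (A2 :|: B2).
have := card_setU_le A1 B1; have := card_setU_le A2 B2.
lia.
Qed.

End CrowdingDistance.

Lemma sdom_const_sum (I : finType) (fv : I -> rat * rat) (c : rat) :
  (forall x, f1 fv x + f2 fv x = c) -> forall x y, ~~ sdom fv x y.
Proof.
move=> sum_c x y; apply/negP => /and3P[le1 le2 /orP[lt1|lt2]].
- by have := ltr_leD lt1 le2; rewrite !sum_c ltxx.
- by have := ler_ltD le1 lt2; rewrite !sum_c ltxx.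
Qed.

Section Antichain.
Variables (I : finType) (fv : I -> rat * rat).
Hypothesis antichain : forall x y, ~~ sdom fv x y.

Lemma nondom_antichain S : nondom fv S = S.
Proof.
by apply/setP => x; rewrite inE andb_idr // => _; apply/forall_inP => y _; apply: antichain.
Qed.

Lemma rest_antichain S k : rest fv S k.+1 = set0.
Proof.
elim: k => [|k IH]; first by rewrite /= nondom_antichain setDv.
by change (rest fv S k.+1 :\: nondom fv (rest fv S k.+1) = set0); rewrite IH set0D.
Qed.

Lemma nsga2_select_antichain (N : nat) (S P : {set I}) : nsga2_select fv N S P ->
  exists s1 s2, [/\ sorting_of (f1 fv) S s1, sorting_of (f2 fv) S s2,
    P \subset S, #|P| = N &
    forall a b, a \in P -> b \in S :\: P -> cd_le (cdist fv s1 s2 b) (cdist fv s1 s2 a)].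
Proof.
case=> [[|i] [fill [short [s1 [s2 [sort1 [sort2 [T [T_sub T_card T_cd ->]]]]]]]]].
  rewrite /front /= nondom_antichain in sort1 sort2 T_sub T_cd.
  rewrite /= setDv cards0 subn0 in T_card.
  by exists s1, s2; rewrite setDv set0U.
by move: (short 0%N isT) fill; rewrite !rest_antichain setD0; lia.
Qed.

End Antichain.

Section CrowdingSurvival.
Variables (I : finType) (fv : I -> rat * rat) (V : finType) (h : I -> V).
Hypothesis fv_factors : forall x y, h x = h y -> fv x = fv y.

Lemma crowding_truncation_keeps_f1 (S P : {set I}) (s1 s2 : seq I) :
  sorting_of (f1 fv) S s1 -> sorting_of (f2 fv) S s2 -> P \subset S ->
  (4 * #|V| <= #|P|)%N ->
  (forall a b, a \in P -> b \in S :\: P -> cd_le (cdist fv s1 s2 b) (cdist fv s1 s2 a)) ->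
  forall x, x \in S -> exists2 y, y \in P & f1 fv y = f1 fv x.
Proof.
move=> [perm1 sorted1] [perm2 sorted2] P_sub card_P P_crowded x xS.
have mem1 z : (z \in s1) = (z \in S) by rewrite (perm_mem perm1) mem_enum.
have mem2 z : (z \in s2) = (z \in S) by rewrite (perm_mem perm2) mem_enum.
have [y first_y f1_yx] := exists_block_first sorted1 (etrans (mem1 x) xS).
have yS : y \in S by move: first_y; rewrite inE mem1 => /andP[].
have [yP|yNP] := boolP (y \in P); first by exists y.
have pos_y : cd_pos (cdist fv s1 s2 y) by apply: cd_pos_block_first; rewrite ?mem2.
have boundary_yP : y |: P \subset block_boundaries fv s1 s2.
  apply/subsetP => z; rewrite in_setU1 => /predU1P[->|zP].
    by apply: cd_pos_block_boundary; rewrite ?mem1 ?mem2.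
  have zS := subsetP P_sub z zP.
  apply: cd_pos_block_boundary; rewrite ?mem1 ?mem2 //.
  by apply: cd_pos_le pos_y; apply: P_crowded; rewrite // in_setD yNP.
have := leq_trans (subset_leq_card boundary_yP)
  (card_block_boundaries_le sorted1 sorted2 fv_factors).
by rewrite cardsU1 yNP; move: card_P; lia.
Qed.

Lemma nsga2_select_keeps_values (c : rat) (N : nat) (S P : {set I}) :
  (forall x, f1 fv x + f2 fv x = c) -> (4 * #|V| <= N)%N -> nsga2_select fv N S P ->
  forall x, x \in S -> exists2 y, y \in P & fv y = fv x.
Proof.
move=> sum_c card_V /(nsga2_select_antichain (sdom_const_sum sum_c)).
move=> [s1 [s2 [sort1 sort2 P_sub card_P P_crowded]]] x xS.
have [|y yP f1_yx] := crowding_truncation_keeps_f1 sort1 sort2 P_sub _ P_crowded xS.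
  by rewrite card_P.
have f2_yx : f2 fv y = f2 fv x by apply: (addrI (f1 fv y)); rewrite sum_c f1_yx sum_c.
exists y => //; move: f1_yx f2_yx; rewrite /f1 /f2.
by case: (fv y) => ? ?; case: (fv x) => ? ? /= -> ->.
Qed.

End CrowdingSurvival.

Theorem lemma1 (n N : nat) (hn : (1 <= n)%N) (hN : (4 * (n + 1) <= N)%N)
  (R : 'I_(N + N) -> n.-tuple bool) (P : {set 'I_(N + N)}) :
  nsga2_select (fun j => OneMinMax (R j)) N setT P ->
  forall (k : nat) (x : 'I_(N + N)), (k <= n)%N ->
    OneMinMax (R x) = (k%:R, (n - k)%N%:R) ->
    exists2 y, y \in P & OneMinMax (R y) = (k%:R, (n - k)%N%:R).
Proof.
move=> select k x _ <-.
set fv := fun j => OneMinMax (R j) in select.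
have count_le j : (count id (R j) <= n)%N.
  by rewrite -[X in (_ <= X)%N](size_tuple (R j)) count_size.
pose ones j : 'I_n.+1 := inord (count id (R j)).
have values_factor i j : ones i = ones j -> fv i = fv j.
  by move=> /(congr1 val); rewrite /= !inordK ?ltnS // /fv /OneMinMax => ->.
have sum_n j : f1 fv j + f2 fv j = n%:R by rewrite /f1 /f2 /= -natrD subnK.
have card_ones : (4 * #|'I_n.+1| <= N)%N by rewrite card_ord -(addn1 n).
have [y yP fv_yx] := nsga2_select_keeps_values values_factor sum_n card_ones select (in_setT x).
by exists y.
Qed.
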